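(* Consider the following model. A principal P and an agent A interact over two periods $t\in\{1,2\}$. States $\omega_t\in\{0,1\}$ satisfy $\Pr[\omega_1=1]=\mu_0\in(0,1)$ and $\Pr[\omega_2=\omega\mid\omega_1=\omega]=\rho\in(1/2,1)$. In each period A chooses $e_t\in\{0,1\}$; if $e_t=1$ he observes $\omega_t$, if $e_t=0$ he observes $\omega_t$ with probability $\pi\in(0,1)$ and nothing otherwise. A reports $r_t\in\{\varnothing,\omega_t\}$ if he observed $\omega_t$, else $r_t=\varnothing$. P chooses $x$ at the end of period 2. Payoffs: P gets $\mathbb{1}[x=\omega_2]-k(e_1+e_2)$, A gets $x-c(e_1+e_2)$, $c,k>0$. Let $\kappa=k/(1-\pi)$, $\gamma=c/(1-\pi)$, $\mu_2(\varnothing)=\rho\mu_0+(1-\rho)(1-\mu_0)$, and assume $\kappa\in(1-\rho,\min\{\mu_2(\varnothing),1-\mu_2(\varnothing)\}]$ and $\gamma\le1-\rho$. Consider the mechanism with $\sigma_1=0$, $\sigma_2(r_1)=\mathbb{1}[r_1=\varnothing]$, and $\hat x(r_1,1)=1$, $\hat x(r_1,0)=0$ for all $r_1$, $\hat x(1,\varnothing)=1$, $\hat x(0,\varnothing)=0$, $\hat x(\varnothing,\varnothing)=0$. Consider A's deviation strategy: test in period 1; report $r_1=1$ if $\omega_1=1$ and $r_1=\varnothing$ otherwise; if $\omega_1=1$, do not test in period 2 and report a freely observed $\omega_2$ if and only if $\omega_2=1$; if $\omega_1=0$, test again in period 2 and report the result. Then this deviation gives A a strictly higher expected payoff than his best strategy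 among those that do not test in period 1 if and only if $$\gamma<\bar\gamma':=\frac{\mu_0(1-\rho)}{1-\mu_0(1-\pi)}.$$
   Context: The mechanism described is the baseline (first-best, efficient-assignment) mechanism for this range of $\kappa$, modified so that no report after a requested test yields assignment $0$. A best-responds to the committed mechanism. *)

From HB Require Import structures.
From mathcomp Require Import all_boot all_order all_algebra.
Set Implicit Arguments. Unset Strict Implicit. Unset Printing Implicit Defensive.
Import Order.TTheory GRing.Theory Num.Theory.
Local Open Scope ring_scope.

(* States are bool (true = 1).  A report / observation is an [option bool]:
   [None] = the empty report / no observation, [Some w] = state w. *)

Definition sigma1 : bool := false.
Definition sigma2 (r1 : option bool) : bool := r1 == None.
Definition xhat (r1 r2 : option bool) : bool :=
  match r2 with
  | Some w => w
  | None => match r1 with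
            | Some w => w
            | None => false
            end
  end.

(* A pure strategy of the agent.
   a_e1 : effort in period 1;
   a_rep1 w : whether to disclose an observed omega_1 = w;
   a_e2 s1 : effort in period 2 given A's period-1 information s1
             (his report r1 and the recommendation sigma2 r1 are functions of s1);
   a_rep2 s1 w : whether to disclose an observed omega_2 = w, given s1. *)
Record Astrat := MkAstrat {
  a_e1 : bool;
  a_rep1 : bool -> bool;
  a_e2 : option bool -> bool;
  a_rep2 : option bool -> bool -> bool }.

Definition report (obs : option bool) (rep : bool -> bool) : option bool :=
  match obs with Some w => if rep w then Some w else None | None => None end.

Section Payoff.
Variable R : realFieldType.

Definition prob1 (mu0 : R) (w1 : bool) : R := if w1 then mu0 else 1 - mu0.
Definition trans (rho : R) (w1 w2 : bool) : R := if w1 == w2 then rho else 1 - rho.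
Definition pfree (pi : R) (f : bool) : R := if f then pi else 1 - pi.

(* A's realized payoff x - c(e1+e2), given states w1 w2 and free-observation
   events f1 f2 (f_t = true: omega_t observed for free). *)
Definition A_outcome (c : R) (s : Astrat) (w1 w2 f1 f2 : bool) : R :=
  let s1 := if a_e1 s || f1 then Some w1 else None in
  let r1 := report s1 (a_rep1 s) in
  let e2 := a_e2 s s1 in
  let s2 := if e2 || f2 then Some w2 else None in
  let r2 := report s2 (a_rep2 s s1) in
  ((xhat r1 r2 : nat)%:R) - c * ((a_e1 s : nat)%:R + (e2 : nat)%:R).

Definition A_payoff (mu0 rho pi c : R) (s : Astrat) : R :=
  \sum_(w1 : bool) \sum_(w2 : bool) \sum_(f1 : bool) \sum_(f2 : bool)
    prob1 mu0 w1 * trans rho w1 w2 * pfree pi f1 * pfree pi f2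
    * A_outcome c s w1 w2 f1 f2.

Definition kappa (k pi : R) : R := k / (1 - pi).
Definition gamma (c pi : R) : R := c / (1 - pi).
Definition mu2_empty (mu0 rho : R) : R := rho * mu0 + (1 - rho) * (1 - mu0).
Definition gamma_bar' (mu0 rho pi : R) : R := mu0 * (1 - rho) / (1 - mu0 * (1 - pi)).

End Payoff.

(* The deviation: test in period 1; report omega_1 iff it is 1; if omega_1 = 1,
   do not test in period 2 and report an observed omega_2 iff it is 1;
   if omega_1 = 0, test in period 2 and report the result.
   (Choices at unreachable information sets, s1 = None, are irrelevant.) *)
Definition deviation : Astrat :=
  MkAstrat true (fun w => w)
    (fun s1 => match s1 with Some true => false | Some false => true | None => false end)
    (fun s1 w => match s1 with Some true => w | _ => true end).

(* Without a period-1 test, A's period-1 information is omega_1 (observed for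
   free) or nothing, and his continuation payoff is at most 1 after omega_1 = 1
   and at most (posterior on omega_2 = 1) - c otherwise: with no disclosed
   omega_1 = 1 the default is x = 0, so A must disclose omega_2 = 1, and a test
   costs c while waiting for a free observation loses (1 - pi) q >= c.  Testing
   only after an uninformative period 1 attains these bounds, so the deviation
   is strictly better iff it beats that strategy, and the payoff difference is
   (1 - pi) mu0 (1 - rho) - c (1 - mu0 (1 - pi)). *)
From HB Require Import structures.
From mathcomp Require Import all_boot all_order all_algebra.
From mathcomp Require Import ring lra.
Import Order.TTheory GRing.Theory Num.Theory.
Set Implicit Arguments.
Local Open Scope ring_scope.

Definition test_if_uninformed : Astrat :=
  MkAstrat false (fun w => w)
    (fun s1 => match s1 with Some true => false | _ => true end) (fun _ w => w).

Section NoPeriod1Test.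
Variables (R : realFieldType) (mu0 rho pi c : R).

Definition cont_payoff (s : Astrat) (s1 : option bool) (q : R) : R :=
  \sum_(w2 : bool) \sum_(f2 : bool) (if w2 then q else 1 - q) * pfree pi f2 *
    ((xhat (report s1 (a_rep1 s))
        (report (if a_e2 s s1 || f2 then Some w2 else None) (a_rep2 s s1)) : nat)%:R
     - c * (a_e2 s s1 : nat)%:R).

Lemma A_payoff_no_test1E (s : Astrat) : a_e1 s = false ->
  A_payoff mu0 rho pi c s =
    pi * mu0 * cont_payoff s (Some true) rho
  + pi * (1 - mu0) * cont_payoff s (Some false) (1 - rho)
  + (1 - pi) * cont_payoff s None (mu2_empty mu0 rho).
Proof.
case: s => e1 rep1 e2 rep2 /= ->.
rewrite /A_payoff /cont_payoff !big_bool /A_outcome /prob1 /trans /pfree /mu2_empty /=.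
ring.
Qed.

Lemma cont_payoff_le1 (s : Astrat) (s1 : option bool) (q : R) :
  0 <= pi <= 1 -> 0 <= c -> 0 <= q <= 1 -> cont_payoff s s1 q <= 1.
Proof.
case/andP=> pi_ge0 pi_le1 c_ge0 /andP[q_ge0 q_le1]; rewrite /cont_payoff !big_bool /pfree.
case: (report s1 (a_rep1 s)) => [[]|]; case: (a_e2 s s1) => /=;
  case: (a_rep2 s s1 true); case: (a_rep2 s s1 false) => /=; nra.
Qed.

Lemma cont_payoff_le_belief (s : Astrat) (s1 : option bool) (q : R) :
  0 <= pi <= 1 -> 0 <= q <= 1 -> s1 != Some true -> c <= q * (1 - pi) ->
  cont_payoff s s1 q <= q - c.
Proof.
case/andP=> pi_ge0 pi_le1 /andP[q_ge0 q_le1] s1_ne1 c_le.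
have r1_ne1 : report s1 (a_rep1 s) != Some true.
  by case: s1 s1_ne1 => [[]|] //= _; case: (a_rep1 s false).
rewrite /cont_payoff !big_bool /pfree.
case: (report s1 (a_rep1 s)) r1_ne1 => [[]|] // _; case: (a_e2 s s1) => /=;
  case: (a_rep2 s s1 true); case: (a_rep2 s s1 false) => /=; nra.
Qed.

Definition no_test1_value : R :=
  pi * mu0 + pi * (1 - mu0) * (1 - rho - c) + (1 - pi) * (mu2_empty mu0 rho - c).

Lemma A_payoff_test_if_uninformed :
  A_payoff mu0 rho pi c test_if_uninformed = no_test1_value.
Proof.
rewrite /A_payoff !big_bool /A_outcome /prob1 /trans /pfree /no_test1_value /mu2_empty /=.
ring.
Qed.

Lemma A_payoff_no_test1_le (s : Astrat) :
  0 <= mu0 <= 1 -> 0 <= rho <= 1 -> 0 <= pi <= 1 -> 0 <= c ->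
  c <= (1 - rho) * (1 - pi) -> c <= mu2_empty mu0 rho * (1 - pi) ->
  a_e1 s = false -> A_payoff mu0 rho pi c s <= no_test1_value.
Proof.
move=> /andP[mu0_ge0 mu0_le1] /andP[rho_ge0 rho_le1] pi01 c_ge0 c_le_rho c_le_mu2.
move=> /A_payoff_no_test1E ->.
have mu2_ge0 : 0 <= mu2_empty mu0 rho by rewrite /mu2_empty; nra.
have mu2_le1 : mu2_empty mu0 rho <= 1 by rewrite /mu2_empty; nra.
have bound1 : cont_payoff s (Some true) rho <= 1.
  by apply: cont_payoff_le1 => //; apply/andP.
have bound0 : cont_payoff s (Some false) (1 - rho) <= 1 - rho - c.
  by apply: cont_payoff_le_belief => //; apply/andP; split; lra.
have bound_none : cont_payoff s None (mu2_empty mu0 rho) <= mu2_empty mu0 rho - c.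
  by apply: cont_payoff_le_belief => //; apply/andP.
have /andP[pi_ge0 pi_le1] := pi01.
have := ler_wpM2l (_ : 0 <= pi * mu0) bound1.
have := ler_wpM2l (_ : 0 <= pi * (1 - mu0)) bound0.
have := ler_wpM2l (_ : 0 <= 1 - pi) bound_none.
rewrite /no_test1_value; nra.
Qed.

Lemma A_payoff_deviation :
  A_payoff mu0 rho pi c deviation = mu0 * (1 - c) + (1 - mu0) * (1 - rho - 2 * c).
Proof. by rewrite /A_payoff !big_bool /A_outcome /prob1 /trans /pfree /=; ring. Qed.

Lemma deviation_gain :
  A_payoff mu0 rho pi c deviation - no_test1_value =
  mu0 * (1 - rho) * (1 - pi) - c * (1 - mu0 * (1 - pi)).
Proof. by rewrite A_payoff_deviation /no_test1_value /mu2_empty; ring. Qed.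

End NoPeriod1Test.

Theorem propositionC4 (R : realFieldType) (mu0 rho pi c k : R) :
  0 < mu0 < 1 -> 2^-1 < rho < 1 -> 0 < pi < 1 -> 0 < c -> 0 < k ->
  1 - rho < kappa k pi ->
  kappa k pi <= Num.min (mu2_empty mu0 rho) (1 - mu2_empty mu0 rho) ->
  gamma c pi <= 1 - rho ->
  ((forall s : Astrat, a_e1 s = false ->
      A_payoff mu0 rho pi c s < A_payoff mu0 rho pi c deviation)
   <-> gamma c pi < gamma_bar' mu0 rho pi).
Proof.
move=> /andP[mu0_gt0 mu0_lt1] /andP[rho_gt rho_lt1] /andP[pi_gt0 pi_lt1] c_gt0 _.
rewrite /gamma /gamma_bar' le_min => kappa_gt /andP[kappa_le_mu2 _].
have onemp_gt0 : 0 < 1 - pi by rewrite subr_gt0.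
have rho_gt0 : 0 < rho by apply: lt_trans rho_gt; rewrite invr_gt0.
have denom_gt0 : 0 < 1 - mu0 * (1 - pi) by nra.
rewrite ler_pdivrMr // => c_le_rho.
have c_le_mu2 : c <= mu2_empty mu0 rho * (1 - pi).
  rewrite -ler_pdivrMr //; apply: le_trans kappa_le_mu2.
  by apply: ltW; apply: le_lt_trans kappa_gt; rewrite ler_pdivrMr.
rewrite ltr_pdivrMr // mulrAC ltr_pdivlMr // -subr_gt0 -deviation_gain subr_gt0.
split=> [/(_ test_if_uninformed erefl) | gain s s_e1].
  by rewrite A_payoff_test_if_uninformed.
apply: le_lt_trans gain; apply: A_payoff_no_test1_le; rewrite ?(ltW c_gt0) //.
all: by apply/andP; split; apply: ltW.
Qed.
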